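(* Let $n,k$ be integers with $0<k\le n$, let $f_j(\Delta_{n,k})$ denote the number of $j$-dimensional faces of the polytope $\Delta_{n,k}$ and $f_j(\Delta'_{n,k})$ the number of $j$-dimensional faces of the half-open hypersimplex $\Delta'_{n,k}$. Then $f_0(\Delta_{n,k})=\binom{n}{k}+\binom{n}{k-1}$, and for $j=1,2,\ldots,n$, $$ f_j(\Delta_{n,k})=f_j(\Delta'_{n,k})+\binom{n}{j+1}\sum_{s=\max\{0,k-1-j\}}^{k-2}\binom{n-j-1}{s}=\binom{n+1}{j+1}\sum_{s=\max\{0,k-j\}}^{k-1}\binom{n-j}{s}. $$
   Context: For integers $0<k\le n$, $\Delta_{n,k}=\{(x_1,\ldots,x_n)\in[0,1]^n : k-1\le x_1+\cdots+x_n\le k\}$ (a convex polytope) and $\Delta'_{n,k}=\{(x_1,\ldots,x_n)\in[0,1]^n : k-1< x_1+\cdots+x_n\le k\}$. A $j$-face of $\Delta'_{n,k}$ is a set $F\cap\Delta'_{n,k}$ where $F$ is a $j$-dimensional face of $\Delta_{n,k}$ with $F\cap\Delta'_{n,k}\neq\emptyset$. Binomial coefficients $\binom{a}{b}$ are $0$ when $b>a$ or $b<0$, and an empty sum is $0$. *)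

From mathcomp Require Import all_boot all_order all_algebra.
From mathcomp Require Import reals.
Import GRing.Theory Num.Theory.



Unset Printing Implicit Defensive.

Local Open Scope ring_scope.

Definition dotv (R : pzRingType) (n : nat) (a x : 'rV[R]_n) : R :=
  \sum_(i < n) a ord0 i * x ord0 i.

Definition hypersimplex (R : realType) (n k : nat) (x : 'rV[R]_n) : Prop :=
  (forall i : 'I_n, 0 <= x ord0 i <= 1) /\
  (k%:R - 1 <= \sum_(i < n) x ord0 i) /\ (\sum_(i < n) x ord0 i <= k%:R).

Definition half_open_hypersimplex (R : realType) (n k : nat) (x : 'rV[R]_n) : Prop :=
  (forall i : 'I_n, 0 <= x ord0 i <= 1) /\
  (k%:R - 1 < \sum_(i < n) x ord0 i) /\ (\sum_(i < n) x ord0 i <= k%:R).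

(** F is a face of the convex polytope P: F = P ∩ {a.x = b} for a valid
    inequality a.x <= b on P (a = 0 gives P itself and the empty face). *)
Definition is_face (R : realType) (n : nat) (P F : 'rV[R]_n -> Prop) : Prop :=
  exists (a : 'rV[R]_n) (b : R),
    (forall x, P x -> dotv R n a x <= b) /\
    (forall x, F x <-> (P x /\ dotv R n a x = b)).

Definition aff_dim (R : realType) (n : nat) (S : 'rV[R]_n -> Prop) (j : nat) : Prop :=
  (exists x : 'I_j.+1 -> 'rV[R]_n, (forall i, S (x i)) /\
      \rank (\matrix_(i < j) (x (lift ord0 i) - x ord0)) = j) /\
  (forall (m : nat) (x : 'I_m.+1 -> 'rV[R]_n), (forall i, S (x i)) ->
      (\rank (\matrix_(i < m) (x (lift ord0 i) - x ord0)) <= j)%N).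

Definition j_face (R : realType) (n : nat) (P : 'rV[R]_n -> Prop) (j : nat)
    (F : 'rV[R]_n -> Prop) : Prop :=
  is_face R n P F /\ aff_dim R n F j.

Definition ho_j_face (R : realType) (n k j : nat) (G : 'rV[R]_n -> Prop) : Prop :=
  exists F : 'rV[R]_n -> Prop,
    j_face R n (hypersimplex R n k) j F /\
    (exists x, F x /\ half_open_hypersimplex R n k x) /\
    (forall x, G x <-> (F x /\ half_open_hypersimplex R n k x)).

(** The family Q of subsets of T (assumed closed under extensional equality)
    has exactly N members, sets being identified up to extensional equality. *)
Definition num_sets (T : Type) (Q : (T -> Prop) -> Prop) (N : nat) : Prop :=
  exists e : 'I_N -> (T -> Prop),
    (forall i, Q (e i)) /\
    (forall i i', (forall x, e i x <-> e i' x) -> i = i') /\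
    (forall F, Q F -> exists i, forall x, F x <-> e i x).

From mathcomp Require Import all_boot all_order all_algebra.
From mathcomp Require Import reals.
From mathcomp Require Import boolp.
From mathcomp Require Import ring lra zify.
Import GRing.Theory Num.Theory Order.TTheory.
Set Implicit Arguments. Unset Strict Implicit. Unset Printing Implicit Defensive.

Local Open Scope ring_scope.

(* Appending the slack coordinate [k - (x_1 + ... + x_n)] identifies Delta_{n,k} with
   the slice [y_1 + ... + y_{n+1} = k] of the cube [0,1]^{n+1}.  A valid inequality
   tight at a point p stays tight at every point of the slice that agrees with p
   where p is 0 or 1; applied to an average p of points of a face F, this shows that
   F is the set [face_of S O] of points equal to 1 on O and to 0 outside S :|: O,
   with S the coordinates that are not constant on F.  Conversely [face_of S O] is
   a face, of dimension |S| - 1, and (S, O) is recovered from its barycenter; it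
   meets Delta'_{n,k} iff the slack coordinate is not in O.  The formulas then count
   the admissible pairs (S, O). *)

Section SlackCoordinates.
Variables (R : realType) (n k : nat).
Notation I := 'I_n.+1.
Notation row := 'rV[R]_n.

Definition hcoord (x : row) (i : I) : R :=
  if unlift ord_max i is Some l then x ord0 l else k%:R - \sum_(l < n) x ord0 l.

Lemma hcoord_lift x l : hcoord x (lift ord_max l) = x ord0 l.
Proof. by rewrite /hcoord liftK. Qed.

Lemma hcoord_max x : hcoord x ord_max = k%:R - \sum_(l < n) x ord0 l.
Proof. by rewrite /hcoord unlift_none. Qed.

Lemma big_ord_lift_max (F : I -> R) :
  \sum_(i < n.+1) F i = \sum_(l < n) F (lift ord_max l) + F ord_max.
Proof.
rewrite big_ord_recr /=; congr (_ + _); apply: eq_bigr => l _; congr F.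
by apply/val_inj; rewrite /= /bump leqNgt ltn_ord.
Qed.

Lemma sum_hcoord x : \sum_i hcoord x i = k%:R.
Proof.
rewrite big_ord_lift_max hcoord_max; under eq_bigr do rewrite hcoord_lift.
by rewrite addrC subrK.
Qed.

Lemma hypersimplexE x : hypersimplex R n k x <-> forall i, 0 <= hcoord x i <= 1.
Proof.
rewrite /hypersimplex; split.
  move=> [H1 [H2 H3]] i; case: (unliftP ord_max i) => [l ->|->].
    by rewrite hcoord_lift.
  rewrite hcoord_max; apply/andP; split; lra.
move=> H; split; first by move=> i; have := H (lift ord_max i); rewrite hcoord_lift.
have := H ord_max; rewrite hcoord_max => /andP[? ?]; split; lra.
Qed.

Lemma half_open_hypersimplexE x :
  half_open_hypersimplex R n k x <-> hypersimplex R n k x /\ hcoord x ord_max < 1.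
Proof.
rewrite /half_open_hypersimplex /hypersimplex hcoord_max; split.
  by move=> [H1 [H2 H3]]; split; [split=> //; split; lra | lra].
by move=> [[H1 [H2 H3]] H4]; split => //; split; lra.
Qed.

Lemma hypersimplex_hcoord_bounds x i :
  hypersimplex R n k x -> 0 <= hcoord x i <= 1.
Proof. by move/hypersimplexE; apply. Qed.

Definition hpoint (g : I -> R) : row := \row_l g (lift ord_max l).

Lemma hcoord_hpoint g : \sum_i g i = k%:R -> forall i, hcoord (hpoint g) i = g i.
Proof.
move=> Hs i; case: (unliftP ord_max i) => [l ->|->].
  by rewrite hcoord_lift mxE.
rewrite hcoord_max; under eq_bigr do rewrite mxE.
by rewrite -Hs big_ord_lift_max addrC addKr.
Qed.

Lemma hcoord_inj x y : (forall i, hcoord x i = hcoord y i) -> x = y.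
Proof. by move=> H; apply/rowP => l; have := H (lift ord_max l); rewrite !hcoord_lift. Qed.

Lemma hcoord_affine (s t : R) x y i : s + t = 1 ->
  hcoord (s *: x + t *: y) i = s * hcoord x i + t * hcoord y i.
Proof.
move=> Hst; case: (unliftP ord_max i) => [l ->|->].
  by rewrite !hcoord_lift !mxE.
rewrite !hcoord_max; under eq_bigr do rewrite !mxE.
rewrite big_split /= -!mulr_sumr -[X in X - _ = _]mul1r -Hst; ring.
Qed.

Lemma hcoord_mean (T : finType) (X : T -> row) (c : R) i : c * #|T|%:R = 1 ->
  hcoord (c *: \sum_t X t) i = c * \sum_t hcoord (X t) i.
Proof.
move=> Hc; case: (unliftP ord_max i) => [l ->|->].
  rewrite !hcoord_lift !mxE summxE; congr (_ * _).
  by apply: eq_bigr => t _; rewrite hcoord_lift.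
rewrite !hcoord_max; under eq_bigr do rewrite !mxE summxE.
under [in RHS]eq_bigr do rewrite hcoord_max.
rewrite -mulr_sumr sumrB exchange_big /= sumr_const.
rewrite mulrBr -[X in X - _]mul1r -Hc -mulr_natr; ring.
Qed.

End SlackCoordinates.

Lemma dotv_lincomb (R : comNzRingType) n (a : 'rV[R]_n) (s t : R) x y :
  dotv R n a (s *: x + t *: y) = s * dotv R n a x + t * dotv R n a y.
Proof.
rewrite /dotv !mulr_sumr -big_split /=; apply: eq_bigr => l _; rewrite !mxE; ring.
Qed.

Lemma dotv_scale_sum (R : comNzRingType) n (T : finType) (X : T -> 'rV[R]_n) (c : R) a :
  dotv R n a (c *: \sum_t X t) = c * \sum_t dotv R n a (X t).
Proof.
rewrite /dotv exchange_big /= mulr_sumr; apply: eq_bigr => l _.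
rewrite !mxE summxE !mulr_sumr; apply: eq_bigr => t _; ring.
Qed.

Section FacesOfHypersimplex.
Context {R : realType} (n k : nat).
Notation I := 'I_n.+1.
Notation row := 'rV[R]_n.
Notation hcoord := (hcoord k).
Notation hyp := (hypersimplex R n k).

Definition face_of (S O : {set I}) (x : row) : Prop :=
  [/\ hyp x, forall i, i \notin S -> i \notin O -> hcoord x i = 0
   & forall i, i \in O -> hcoord x i = 1].

(* The pairs for which [face_of S O] is nonempty with free coordinates exactly [S]:
   these must carry the remaining mass [k - #|O|] strictly inside the cube. *)
Definition admissible (S O : {set I}) : bool :=
  [disjoint S & O] &&
  (((#|S| == 0%N) && (#|O| == k)) || ((1 < #|S|)%N && (#|O| < k < #|O| + #|S|)%N)).

Definition bary_coord (S O : {set I}) (i : I) : R :=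
  if i \in O then 1 else if i \in S then (k - #|O|)%:R / #|S|%:R else 0.

Definition barycenter S O : row := hpoint (bary_coord S O).

Section Admissible.
Variables (S O : {set I}).
Hypothesis SO : admissible S O.

Lemma sum_bary_coord : \sum_i bary_coord S O i = k%:R.
Proof.
move: SO => /andP[dis card_SO].
have -> : \sum_i bary_coord S O i =
    \sum_(i in O) 1 + \sum_(i in S) ((k - #|O|)%:R / #|S|%:R).
  rewrite big_mkcond [X in _ = X + _]big_mkcond [X in _ = _ + X]big_mkcond.
  rewrite -big_split /=; apply: eq_bigr => i _; rewrite /bary_coord.
  case: ifP => iO; case: ifP => iS; rewrite ?addr0 ?add0r //.
  by have := disjointFl dis iO; rewrite iS.
rewrite !sumr_const.
case/orP: card_SO => [/andP[/eqP -> /eqP ->]|/andP[S2 /andP[Ok kOS]]].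
  by rewrite mulr0n addr0.
rewrite -[_ *+ #|S|]mulr_natr divfK; last by rewrite pnatr_eq0; lia.
by rewrite -natrD; congr (_%:R); lia.
Qed.

Lemma hcoord_barycenter i : hcoord (barycenter S O) i = bary_coord S O i.
Proof. by rewrite hcoord_hpoint // sum_bary_coord. Qed.

Lemma bary_coord_gt0_lt1 i : i \in S -> 0 < bary_coord S O i < 1.
Proof.
move: SO => /andP[dis card_SO] iS; rewrite /bary_coord (disjointFr dis iS) iS.
case/orP: card_SO => [/andP[/eqP S0 _]|/andP[S2 /andP[Ok kOS]]].
  by move: (card0_eq S0 i); rewrite inE iS.
have S_gt0 : (0 < #|S|%:R :> R) by rewrite ltr0n; lia.
apply/andP; split; first by apply: divr_gt0 => //; rewrite ltr0n; lia.
by rewrite ltr_pdivrMr // mul1r ltr_nat; lia.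
Qed.

Lemma face_of_barycenter : face_of S O (barycenter S O).
Proof.
split; [apply/hypersimplexE => i | move=> i | move=> i];
  rewrite hcoord_barycenter /bary_coord.
- have := bary_coord_gt0_lt1 (i := i); rewrite /bary_coord.
  case: ifP => _ ; first by move=> _; apply/andP; lra.
  by case: ifP => iS => [/(_ isT)/andP[? ?]|_]; apply/andP; lra.
- by move=> /negbTE -> /negbTE ->.
- by move=> ->.
Qed.

Lemma hcoord_barycenter_eq1 i : (hcoord (barycenter S O) i == 1) = (i \in O).
Proof.
rewrite hcoord_barycenter; have := bary_coord_gt0_lt1 (i := i); rewrite /bary_coord.
case: ifP => iO; first by rewrite eqxx.
case: ifP => iS => [/(_ isT)/andP[_ lt1]|_]; first exact: lt_eqF.
by rewrite eq_sym oner_eq0.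
Qed.

Lemma hcoord_barycenter_eq0 i :
  (hcoord (barycenter S O) i == 0) = (i \notin S) && (i \notin O).
Proof.
rewrite hcoord_barycenter; have := bary_coord_gt0_lt1 (i := i); rewrite /bary_coord.
case: ifP => iO; first by rewrite oner_eq0 andbF.
case: ifP => iS => [/(_ isT)/andP[gt0 _]|_]; last by rewrite eqxx.
exact: gt_eqF.
Qed.

End Admissible.

(* Over the hypersimplex, [\sum_i face_weight S O i * hcoord x i <= #|O|], with
   equality exactly on [face_of S O]. *)
Definition face_weight (S O : {set I}) (i : I) : R :=
  if i \in O then 1 else if i \in S then 0 else -1.

Lemma face_weight_hcoord_le S O x i :
  hyp x -> face_weight S O i * hcoord x i <= (i \in O)%:R.
Proof.
move/hypersimplexE/(_ i)/andP => [x0 x1]; rewrite /face_weight.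
by case: (i \in O) => /=; [lra | case: ifP => _; lra].
Qed.

Lemma face_of_is_face S O : is_face R n hyp (face_of S O).
Proof.
set w := face_weight S O.
pose a : row := \row_l (w (lift ord_max l) - w ord_max).
have dotv_a x : dotv R n a x = \sum_i w i * hcoord x i - w ord_max * k%:R.
  rewrite big_ord_lift_max /dotv hcoord_max; under eq_bigr do rewrite mxE mulrBl.
  under [in RHS]eq_bigr do rewrite hcoord_lift.
  rewrite sumrB -mulr_sumr; ring.
have card_O : \sum_i (i \in O)%:R = #|O|%:R :> R.
  rewrite (eq_bigr (fun i => if i \in O then 1 else 0)) -?big_mkcond /= ?sumr_const //.
  by move=> i _; case: (i \in O).
exists a, (#|O|%:R - w ord_max * k%:R); split.
  move=> x hx; rewrite dotv_a lerD2r -card_O; apply: ler_sum => i _.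
  exact: face_weight_hcoord_le.
move=> x; split.
  move=> [hx x0 x1]; split => //; rewrite dotv_a; congr (_ - _); rewrite -card_O.
  apply: eq_bigr => i _; rewrite /w /face_weight.
  case: ifP => iO; first by rewrite x1 // mulr1.
  by case: ifP => iS; rewrite ?mul0r // x0 ?iS ?iO // mulr0.
move=> [hx]; rewrite dotv_a -card_O => tight.
have slack0 i : (i \in O)%:R - w i * hcoord x i = 0.
  apply: (@psumr_eq0P _ _ xpredT (fun j => (j \in O)%:R - w j * hcoord x j)) => //.
    by move=> j _; rewrite subr_ge0; apply: face_weight_hcoord_le.
  rewrite sumrB; lra.
split => // i => [/negbTE iS /negbTE iO|iO]; have := slack0 i;
  rewrite /w /face_weight ?iS ?iO /=; lra.
Qed.

End FacesOfHypersimplex.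

Lemma sum_kronecker (R : pzSemiRingType) (T : finType) (a : T) :
  \sum_(u : T) (u == a)%:R = 1 :> R.
Proof. by rewrite (bigD1 a) //= eqxx big1 ?addr0 // => u /negbTE ->. Qed.

Lemma sum_lift_kronecker_mul (R : pzSemiRingType) n (a b : 'I_n.+1) : b != ord_max ->
  \sum_(l < n) (lift ord_max l == a)%:R * (lift ord_max l == b)%:R = (a == b)%:R :> R.
Proof.
case: (unliftP ord_max b) => [lb ->|->]; last by rewrite eqxx.
move=> _; rewrite (bigD1 lb) //= eqxx mulr1 big1 ?addr0; first by rewrite eq_sym.
by move=> l lb'; rewrite (inj_eq lift_inj) (negbTE lb') mulr0.
Qed.

Lemma aff_dim_uniq (R : realType) n (F : 'rV[R]_n -> Prop) j j' :
  aff_dim R n F j -> aff_dim R n F j' -> j = j'.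
Proof.
move=> [[x [Fx rk_x]] le_j] [[x' [Fx' rk_x']] le_j'].
by have := le_j' _ x Fx; have := le_j _ x' Fx'; rewrite rk_x rk_x'; lia.
Qed.

Lemma aff_dim_ext (R : realType) n (F G : 'rV[R]_n -> Prop) j :
  (forall x, F x <-> G x) -> aff_dim R n F j -> aff_dim R n G j.
Proof.
move=> FG [[x [Fx rk_x]] le_j]; split; first by exists x; split => // i; apply/FG.
by move=> m y Gy; apply: le_j => i; apply/FG.
Qed.

Section FaceDimension.
Context {R : realType} (n k : nat) (S O : {set 'I_n.+1}).
Hypothesis SO : admissible k S O.
Notation I := 'I_n.+1.
Notation row := 'rV[R]_n.
Notation hcoord := (hcoord k).
Notation face := (@face_of R n k S O).
Notation barycenter := (@barycenter R n k S O).

Lemma face_of_hcoord_out x y u :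
  face x -> face y -> u \notin S -> hcoord x u = hcoord y u.
Proof.
move=> [_ x0 x1] [_ y0 y1] uS.
by case: (boolP (u \in O)) => uO; [rewrite x1 ?y1 | rewrite x0 ?y0].
Qed.

Lemma aff_dim_face_of_vertex : #|S| = 0%N -> aff_dim R n face 0.
Proof.
move=> S0.
have face_eq x : face x -> x = barycenter.
  move=> fx; apply: (hcoord_inj (k := k)) => i.
  by apply: face_of_hcoord_out fx (face_of_barycenter SO) _; rewrite (card0_eq S0).
split.
  exists (fun _ => barycenter); split=> [_|]; first exact: face_of_barycenter.
  by apply/eqP; rewrite -leqn0 rank_leq_row.
move=> m x fx.
have -> : \matrix_(i < m) (x (lift ord0 i) - x ord0) = 0.
  by apply/matrixP => i l; rewrite !mxE (face_eq _ (fx _)) (face_eq _ (fx ord0)) subrr.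
by rewrite mxrank0.
Qed.

Section FreeCoordinates.
Hypothesis S_gt1 : (1 < #|S|)%N.

Let e : R := #|S|%:R^-1.

Lemma bary_coord_free i : i \in S -> bary_coord k S O i = (k - #|O|)%:R * e.
Proof. by case/andP: SO => dis _ iS; rewrite /bary_coord (disjointFr dis iS) iS. Qed.

(* Moving mass [e] from [v] to [u] stays in the face since [e <= (k - #|O|) e] and
   [(k - #|O|) e + e <= 1]. *)
Definition shift_coord (u v w : I) : R :=
  bary_coord k S O w + e * ((w == u)%:R - (w == v)%:R).

Lemma sum_shift_coord u v : \sum_w shift_coord u v w = k%:R.
Proof.
by rewrite big_split /= sum_bary_coord // -mulr_sumr sumrB !sum_kronecker subrr mulr0 addr0.
Qed.

Lemma face_of_shift u v : u \in S -> v \in S -> face (hpoint (shift_coord u v)).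
Proof.
move=> uS vS; have hc := hcoord_hpoint (sum_shift_coord u v).
have shift_out w : w \notin S -> shift_coord u v w = bary_coord k S O w.
  move=> wS; rewrite /shift_coord.
  have [wu|wu] := eqVneq w u; first by rewrite wu uS in wS.
  have [wv|wv] := eqVneq w v; first by rewrite wv vS in wS.
  by rewrite subrr mulr0 addr0.
have [hb b0 b1] : face barycenter := face_of_barycenter SO.
have [dis card_SO] := andP SO.
split; [apply/hypersimplexE => w | move=> w wS wO | move=> w wO]; rewrite hc.
- case: (boolP (w \in S)) => wS; last first.
    by rewrite shift_out // -(hcoord_barycenter SO); exact: hypersimplex_hcoord_bounds.
  have {card_SO}[Ok kOS] : (#|O| < k)%N /\ (k < #|O| + #|S|)%N.
    by case/orP: card_SO => /andP[]; [lia | move=> _ /andP[]].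
  have e_gt0 : 0 < e by rewrite invr_gt0 ltr0n; lia.
  have e_le : e <= (k - #|O|)%:R * e.
    by rewrite -[X in X <= _]mul1r ler_wpM2r ?(ltW e_gt0) // ler1n; lia.
  have le_1 : (k - #|O|)%:R * e + e <= 1.
    rewrite -[X in _ + X]mul1r -mulrDl /e ler_pdivrMr ?ltr0n; last lia.
    by rewrite mul1r natr1 ler_nat; lia.
  rewrite /shift_coord bary_coord_free //.
  by case: (w == u); case: (w == v); rewrite /= ?(mulr1n, mulr0n); apply/andP; split; lra.
- by rewrite shift_out // -(hcoord_barycenter SO) b0.
- rewrite shift_out; last by rewrite (disjointFl dis wO).
  by rewrite -(hcoord_barycenter SO) b1.
Qed.

Variable s0 : I.
Hypotheses (s0S : s0 \in S) (s0_max : ord_max \in S -> s0 = ord_max).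

Let A := S :\ s0.
Let h (i : 'I_#|A|) : I := enum_val i.

Let h_S i : h i \in S.
Proof. by have := enum_valP i; rewrite in_setD1 => /andP[]. Qed.

Let h_neq_s0 i : h i != s0.
Proof. by have := enum_valP i; rewrite in_setD1 => /andP[]. Qed.

Let h_neq_max i : h i != ord_max.
Proof. by apply: contraNneq (h_neq_s0 i) => hi; rewrite hi s0_max // -hi. Qed.

Lemma face_of_points_rank : exists x : 'I_#|A|.+1 -> row,
  (forall i, face (x i)) /\ \rank (\matrix_(i < #|A|) (x (lift ord0 i) - x ord0)) = #|A|.
Proof.
pose x i := if unlift ord0 i is Some i' then hpoint (shift_coord (h i') s0) else barycenter.
exists x; split.
  move=> i; rewrite /x; case: (unlift ord0 i) => [i'|]; last exact: face_of_barycenter.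
  exact: face_of_shift.
set D := \matrix_(i < #|A|) _.
have -> : D = \matrix_(i, l) (e * ((lift ord_max l == h i)%:R - (lift ord_max l == s0)%:R)).
  apply/matrixP => i l.
  by rewrite !mxE /x liftK unlift_none /barycenter /hpoint !mxE /shift_coord; ring.
have e_neq0 : e != 0 by rewrite invr_eq0 pnatr_eq0; lia.
apply/eqP/row_freeP; exists (\matrix_(l, i') (e^-1 * (lift ord_max l == h i')%:R)).
apply/matrixP => i i'; rewrite !mxE; under eq_bigr do rewrite !mxE.
under eq_bigr do rewrite mulrACA divff // mul1r mulrBl.
rewrite sumrB !sum_lift_kronecker_mul // (inj_eq enum_val_inj).
by rewrite [s0 == _]eq_sym (negbTE (h_neq_s0 i')) subr0.
Qed.

(* Outside [S] the coordinates are fixed and over [S] they sum to a constant, so a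
   difference of two points of the face is determined by its coordinates in [A]. *)
Lemma face_diff_decomp x y v : face x -> face y ->
  hcoord x v - hcoord y v =
  \sum_(i < #|A|) (hcoord x (h i) - hcoord y (h i)) * ((v == h i)%:R - (v == s0)%:R).
Proof.
move=> fx fy; set d := fun u => hcoord x u - hcoord y u.
have d_out u : u \notin S -> d u = 0.
  by move=> uS; rewrite /d (face_of_hcoord_out fx fy uS) subrr.
have sum_A : \sum_(u in A) d u = - d s0.
  have : \sum_u d u = 0 by rewrite /d sumrB !sum_hcoord subrr.
  rewrite (bigID (mem S)) /= [X in _ + X]big1 => [|u /d_out //].
  rewrite addr0 (bigD1 s0) //= => sum0.
  suff -> : \sum_(u in A) d u = \sum_(u in S | u != s0) d u by lra.
  by apply: eq_bigl => u; rewrite in_setD1 andbC.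
have sum_A_delta : \sum_(u in A) d u * (v == u)%:R = (v \in A)%:R * d v.
  case: (boolP (v \in A)) => vA.
    rewrite (bigD1 v) //= eqxx mulr1 big1 ?addr0 ?mul1r // => u /andP[_ uv].
    by rewrite eq_sym (negbTE uv) mulr0.
  rewrite big1 ?mul0r // => u uA.
  by rewrite (_ : (v == u) = false) ?mulr0 //; apply: contraNF vA => /eqP ->.
rewrite -/(d v).
transitivity (\sum_(u in A) d u * (v == u)%:R - (v == s0)%:R * \sum_(u in A) d u).
  rewrite sum_A_delta sum_A.
  have [->|vs0] := eqVneq v s0; first by rewrite in_setD1 eqxx /=; ring.
  case: (boolP (v \in A)) => vA /=; first ring.
  have vS : v \notin S by move: vA; rewrite in_setD1 vs0.
  by rewrite (d_out _ vS); ring.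
rewrite (big_enum_val (fun u => d u * (v == u)%:R)) (big_enum_val d) /=.
by rewrite mulr_sumr -sumrB; apply: eq_bigr => i _; rewrite /d /h; ring.
Qed.

Lemma face_diff_rank m (x : 'I_m.+1 -> row) : (forall i, face (x i)) ->
  (\rank (\matrix_(i < m) (x (lift ord0 i) - x ord0)) <= #|A|)%N.
Proof.
move=> fx; set U : 'M[R]_(m, #|A|) :=
  \matrix_(r, i) (hcoord (x (lift ord0 r)) (h i) - hcoord (x ord0) (h i)).
pose C : 'M[R]_(#|A|, n) :=
  \matrix_(i, l) ((lift ord_max l == h i)%:R - (lift ord_max l == s0)%:R).
have -> : \matrix_(i < m) (x (lift ord0 i) - x ord0) = U *m C.
  apply/matrixP => r l; rewrite !mxE -(hcoord_lift k (x _)) -(hcoord_lift k (x ord0)).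
  rewrite (face_diff_decomp (lift ord_max l) (fx _) (fx _)).
  by apply: eq_bigr => i _; rewrite !mxE.
exact: leq_trans (mxrankM_maxr _ _) (rank_leq_row _).
Qed.

End FreeCoordinates.

Lemma aff_dim_face_of : aff_dim R n face #|S|.-1.
Proof.
case: (posnP #|S|) => [S0|S_gt0]; first by rewrite S0; exact: aff_dim_face_of_vertex.
have S_gt1 : (1 < #|S|)%N.
  by case/andP: SO => _ /orP[/andP[/eqP S0 _]|/andP[]//]; rewrite S0 in S_gt0.
have [s0 s0S s0_max] : exists2 s0, s0 \in S & (ord_max \in S -> s0 = ord_max).
  case: (boolP (ord_max \in S)) => maxS; first by exists ord_max.
  by case/card_gt0P: S_gt0 => s sS; exists s => // maxS'; rewrite maxS' in maxS.
have -> : #|S|.-1 = #|S :\ s0| by rewrite (cardsD1 s0 S) s0S.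
split; first exact: face_of_points_rank.
exact: face_diff_rank.
Qed.

End FaceDimension.

Lemma sumr_gt0_witness (R : numDomainType) (T : finType) (P : pred T) (f : T -> R) t :
  P t -> (forall u, P u -> 0 <= f u) -> 0 < f t -> 0 < \sum_(u | P u) f u.
Proof.
move=> Pt f_ge0 ft_gt0; rewrite (bigD1 t) //=; apply: ltr_wpDr => //.
by apply: sumr_ge0 => u /andP[Pu _]; apply: f_ge0.
Qed.

Lemma sumr_gt0_lt_card (R : numDomainType) (T : finType) (S : {set T}) (f : T -> R) :
  S != set0 -> (forall i, i \in S -> 0 < f i < 1) -> 0 < \sum_(i in S) f i < #|S|%:R.
Proof.
move=> /set0Pn [s sS] f01; apply/andP; split.
  by apply: (sumr_gt0_witness sS) => [i /f01 /andP[/ltW]|] //; case/andP: (f01 s sS).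
rewrite -subr_gt0 -[_%:R]mulr1n -sumr_const -sumrB.
apply: (sumr_gt0_witness sS) => [i /f01 /andP[_ /ltW]|]; rewrite ?subr_ge0 ?subr_gt0 //.
by case/andP: (f01 s sS).
Qed.

Section FaceCharacterization.
Variables (R : realType) (n k : nat).
Notation I := 'I_n.+1.
Notation row := 'rV[R]_n.
Notation hcoord := (hcoord k).
Notation hyp := (hypersimplex R n k).

Lemma admissible_of_interior (S O : {set I}) (p : row) : [disjoint S & O] -> face_of k S O p ->
  (forall i, i \in S -> 0 < hcoord p i < 1) -> admissible k S O.
Proof.
move=> dis [hp p0 p1] pS; rewrite /admissible dis /=.
have k_eq : k%:R = #|O|%:R + \sum_(i in S) hcoord p i :> R.
  rewrite -(sum_hcoord k p) (bigID (mem O)) /= (eq_bigr (fun=> 1)) ?sumr_const //.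
  congr (_ + _); rewrite (bigID (mem S)) /= [X in _ + X]big1 ?addr0.
    by apply: eq_bigl => i; rewrite andbC; case: (boolP (i \in S)) => // /(disjointFr dis) ->.
  by move=> i /andP[iO iS]; apply: p0.
have [S0 | S_neq0] := eqVneq S set0.
  move: k_eq; rewrite S0 cards0 eqxx big_set0 addr0 orbF /=.
  by move/eqP; rewrite eqr_nat eq_sym.
have /andP[sum_gt0 sum_lt] := sumr_gt0_lt_card S_neq0 pS.
have Ok : (#|O| < k)%N by rewrite -(ltr_nat R) k_eq ltrDl.
have kOS : (k < #|O| + #|S|)%N by rewrite -(ltr_nat R) natrD k_eq ltrD2l.
apply/orP; right; rewrite Ok kOS /= andbT -(ltn_add2l #|O|) addn1.
exact: leq_ltn_trans Ok kOS.
Qed.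

(* Moving from [p] away from [y] stays in the hypersimplex for a small step, since
   [p] is not on the boundary in the coordinates where [y] differs from it. *)
Lemma dotv_eq_of_agree (a : row) (b : R) p y :
  (forall x, hyp x -> dotv R n a x <= b) -> hyp p -> dotv R n a p = b -> hyp y ->
  (forall i, hcoord p i = 0 \/ hcoord p i = 1 -> hcoord y i = hcoord p i) ->
  dotv R n a y = b.
Proof.
move=> ab_valid hp ap hy agree.
pose eps := \big[Order.min/1]_(i | 0 < hcoord p i < 1)
  Order.min (hcoord p i) (1 - hcoord p i).
have eps_gt0 : 0 < eps.
  apply: (big_ind (fun v => 0 < v)) => // [u v u0 v0|i /andP[pi0 pi1]].
    by rewrite lt_min u0 v0.
  by rewrite lt_min pi0 subr_gt0 pi1.
have eps_le i : 0 < hcoord p i < 1 -> eps <= hcoord p i /\ eps <= 1 - hcoord p i.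
  move=> pi; have := bigmin_le_cond (P := fun i => 0 < hcoord p i < 1) 1
    (fun i => Order.min (hcoord p i) (1 - hcoord p i)) pi.
  by rewrite -/eps => le_eps; split; apply: le_trans le_eps _; rewrite ge_min lexx ?orbT.
pose q : row := (1 + eps) *: p + (- eps) *: y.
have hq : hyp q.
  apply/hypersimplexE => i; rewrite hcoord_affine; last ring.
  have /andP[pi0 pi1] := hypersimplex_hcoord_bounds i hp.
  have /andP[yi0 yi1] := hypersimplex_hcoord_bounds i hy.
  have [pi|pi] := eqVneq (hcoord p i) 0.
    by rewrite agree ?pi; [apply/andP; lra | left].
  have [pi'|pi'] := eqVneq (hcoord p i) 1.
    by rewrite agree ?pi'; [apply/andP; lra | right].
  have [e1 e2] : eps <= hcoord p i /\ eps <= 1 - hcoord p i.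
    by apply: eps_le; rewrite !lt_neqAle [0 == _]eq_sym pi pi' pi0 pi1.
  apply/andP; split; nra.
have := ab_valid q hq; rewrite dotv_lincomb ap => aq.
have := ab_valid y hy; nra.
Qed.

Lemma face_rel_interior_point (a : row) (b : R) (F : row -> Prop) :
  (forall x, hyp x -> dotv R n a x <= b) ->
  (forall x, F x <-> hyp x /\ dotv R n a x = b) -> (exists x, F x) ->
  exists2 p, F p & forall i, (exists2 x, F x & hcoord x i != 0) ->
    (exists2 x, F x & hcoord x i != 1) -> 0 < hcoord p i < 1.
Proof.
move=> ab_valid F_eq [x0 Fx0].
have Fhyp x : F x -> hyp x by move/F_eq => [].
have witness (c : R) i : exists y,
    F y /\ ((exists2 x, F x & hcoord x i != c) -> hcoord y i != c).
  case: (pselect (exists2 x, F x & hcoord x i != c)) => [[y Fy yi]|nex].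
    by exists y.
  by exists x0; split => // ex; case: nex.
have [y0 Fy0] := choice (witness 0); have [y1 Fy1] := choice (witness 1).
pose Y (t : I * bool) : row := if t.2 then y0 t.1 else y1 t.1.
have FY t : F (Y t) by rewrite /Y; case: t.2; [case: (Fy0 t.1) | case: (Fy1 t.1)].
have Y01 t i : 0 <= hcoord (Y t) i <= 1 by apply: hypersimplex_hcoord_bounds; apply: Fhyp.
pose N := #|{: I * bool}|%:R : R.
have N_gt0 : 0 < N by rewrite ltr0n card_prod card_ord card_bool.
have NV : N^-1 * N = 1 by rewrite mulVf // gt_eqF.
have hp i : hcoord (N^-1 *: \sum_t Y t) i = N^-1 * \sum_t hcoord (Y t) i.
  exact: hcoord_mean.
have sum_le i : \sum_t hcoord (Y t) i <= N.
  by rewrite /N -sumr_const; apply: ler_sum => t _; case/andP: (Y01 t i).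
exists (N^-1 *: \sum_t Y t).
  apply/F_eq; split.
    apply/hypersimplexE => i; rewrite hp; apply/andP; split.
      by rewrite mulr_ge0 ?invr_ge0 ?(ltW N_gt0) //; apply: sumr_ge0 => t _; case/andP: (Y01 t i).
    by rewrite -NV ler_wpM2l ?invr_ge0 ?(ltW N_gt0).
  rewrite dotv_scale_sum (eq_bigr (fun=> b)) => [|t _]; last by have /F_eq[_ ->] := FY t.
  by rewrite sumr_const -mulr_natr mulrCA NV mulr1.
move=> i ex0 ex1; rewrite hp; apply/andP; split.
  rewrite mulr_gt0 ?invr_gt0 //; apply: (@sumr_gt0_witness _ _ xpredT _ (i, true)) => //.
    by move=> t _; case/andP: (Y01 t i).
  by case/andP: (Y01 (i, true) i) => + _; rewrite le_eqVlt eq_sym (negbTE (proj2 (Fy0 i) ex0)).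
rewrite -NV ltr_pM2l ?invr_gt0 // -subr_gt0 /N -sumr_const -sumrB.
apply: (@sumr_gt0_witness _ _ xpredT _ (i, false)) => [//|t _|].
  by rewrite subr_ge0; case/andP: (Y01 t i).
rewrite subr_gt0; case/andP: (Y01 (i, false) i) => _.
by rewrite le_eqVlt (negbTE (proj2 (Fy1 i) ex1)).
Qed.

Lemma face_of_nonempty_face (F : row -> Prop) : is_face R n hyp F -> (exists x, F x) ->
  exists S O, admissible k S O /\ forall x, F x <-> face_of k S O x.
Proof.
move=> [a [b [ab_valid F_eq]]] [x0 Fx0].
pose Z := [set i : I | `[< forall x, F x -> hcoord x i = 0 >]].
pose O := [set i : I | `[< forall x, F x -> hcoord x i = 1 >]].
pose S := ~: (Z :|: O).
have Z0 i x : i \in Z -> F x -> hcoord x i = 0 by rewrite inE => /asboolP; apply.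
have O1 i x : i \in O -> F x -> hcoord x i = 1 by rewrite inE => /asboolP; apply.
have notZ i : i \notin Z -> exists2 x, F x & hcoord x i != 0.
  rewrite inE => /asboolPn /existsNP [x /not_implyP [Fx xi]]; exists x => //; exact/eqP.
have notO i : i \notin O -> exists2 x, F x & hcoord x i != 1.
  rewrite inE => /asboolPn /existsNP [x /not_implyP [Fx xi]]; exists x => //; exact/eqP.
have outS i : i \notin S -> i \notin O -> i \in Z.
  by move=> iS iO; move: iS; rewrite in_setC in_setU negbK (negbTE iO) orbF.
have [p Fp p01] := face_rel_interior_point ab_valid F_eq (ex_intro _ x0 Fx0).
have F_face x : F x -> face_of k S O x.
  move=> Fx; split; first by case/F_eq: Fx.
    by move=> i iS iO; apply: Z0 Fx; apply: outS.
  by move=> i iO; apply: O1.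
exists S, O; split.
  apply: (admissible_of_interior _ (F_face p Fp)).
    by rewrite disjoints_subset /S setCU subIset // orbC subxx.
  by move=> i; rewrite in_setC in_setU negb_or => /andP[/notZ iZ /notO iO]; apply: p01.
move=> y; split; first exact: F_face.
move=> [hy y0 y1]; apply/F_eq; split => //.
have [hp ap] := F_eq p; have {hp ap}[hp ap] := hp Fp.
apply: (dotv_eq_of_agree ab_valid hp ap hy) => i pi.
have [iO|iO] := boolP (i \in O); first by rewrite y1 // (O1 i p iO Fp).
case: (boolP (i \in S)) => iS; last by rewrite y0 // (Z0 i p (outS i iS iO) Fp).
have := p01 i; rewrite in_setC in_setU negb_or in iS; case/andP: iS => /notZ iZ /notO iO'.
by move/(_ iZ iO')/andP => -[pi0 pi1]; case: pi => pi; lra.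
Qed.

End FaceCharacterization.

Lemma num_sets_card (U : Type) (T : finType) (V : {set T}) (E : T -> U -> Prop)
    (Q : (U -> Prop) -> Prop) :
  (forall t, t \in V -> Q (E t)) ->
  (forall t t', t \in V -> t' \in V -> (forall x, E t x <-> E t' x) -> t = t') ->
  (forall F, Q F -> exists2 t, t \in V & forall x, F x <-> E t x) ->
  num_sets U Q #|V|.
Proof.
move=> QE E_inj E_onto; exists (fun i => E (enum_val i)); split; [|split].
- by move=> i; apply: QE; apply: enum_valP.
- by move=> i i' Ei; apply: enum_val_inj; apply: E_inj => //; apply: enum_valP.
- move=> F /E_onto [t tV EF]; exists (enum_rank_in tV t) => x.
  by rewrite enum_rankK_in.
Qed.

Section FaceCount.
Variables (R : realType) (n k : nat).
Notation I := 'I_n.+1.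
Notation hcoord := (hcoord k).
Notation hyp := (hypersimplex R n k).
Notation face_of := (@face_of R n k).
Notation barycenter := (@barycenter R n k).

Lemma j_face_face_of S O : admissible k S O -> j_face R n hyp #|S|.-1 (face_of S O).
Proof. by move=> SO; split; [apply: face_of_is_face | apply: aff_dim_face_of]. Qed.

Lemma j_faceP j F : j_face R n hyp j F ->
  exists S O, [/\ admissible k S O, #|S|.-1 = j & forall x, F x <-> face_of S O x].
Proof.
move=> [F_face F_dim].
have F_neq0 : exists x, F x by case: F_dim => [[x [Fx _]] _]; exists (x ord0).
have [S [O [SO F_eq]]] := face_of_nonempty_face F_face F_neq0.
exists S, O; split => //; apply: (aff_dim_uniq (aff_dim_face_of SO)).
exact: aff_dim_ext F_dim.
Qed.

Lemma barycenter_in_face_of S O S' O' : admissible k S O ->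
  face_of S' O' (barycenter S O) ->
  {subset O' <= O} /\ (forall i, i \notin S' -> i \notin O' -> (i \notin S) && (i \notin O)).
Proof.
move=> SO [_ b0 b1]; split => [i iO'|i iS' iO'].
  by rewrite -(hcoord_barycenter_eq1 (R := R) SO) b1.
by rewrite -(hcoord_barycenter_eq0 (R := R) SO) b0.
Qed.

Lemma face_of_inj S O S' O' : admissible k S O -> admissible k S' O' ->
  face_of S' O' (barycenter S O) -> face_of S O (barycenter S' O') -> (S, O) = (S', O').
Proof.
move=> SO SO' b_in b_in'.
have [O'O out'] := barycenter_in_face_of SO b_in.
have [OO' out] := barycenter_in_face_of SO' b_in'.
have eqO : O = O' by apply/setP => i; apply/idP/idP => [/OO'|/O'O].
subst O'; have [/andP[dis _] /andP[dis' _]] := (SO, SO').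
congr (_, _); apply/setP => i; case: (boolP (i \in O)) => iO.
  by rewrite (disjointFl dis iO) (disjointFl dis' iO).
by apply/idP/idP => iS; apply/negPn/negP => iS';
  [case/andP: (out' i iS' iO) | case/andP: (out i iS' iO)]; rewrite iS.
Qed.

Definition face_types j : {set {set I} * {set I}} :=
  [set t | admissible k t.1 t.2 && (#|t.1|.-1 == j)].

Definition half_open_face_types j : {set {set I} * {set I}} :=
  [set t in face_types j | ord_max \notin t.2].

Lemma num_j_faces j : num_sets _ (j_face R n hyp j) #|face_types j|.
Proof.
apply: (num_sets_card (E := fun t => face_of t.1 t.2)).
- by move=> [S O]; rewrite inE /= => /andP[SO /eqP <-]; exact: j_face_face_of.
- move=> [S O] [S' O']; rewrite !inE /= => /andP[SO _] /andP[SO' _] E.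
  by apply: face_of_inj => //; apply/E; exact: face_of_barycenter.
- move=> F /j_faceP [S [O [SO dimS F_eq]]]; exists (S, O) => //.
  by rewrite inE /= SO dimS eqxx.
Qed.

Lemma half_open_barycenter S O : admissible k S O -> ord_max \notin O ->
  half_open_hypersimplex R n k (barycenter S O).
Proof.
move=> SO maxO; apply/half_open_hypersimplexE; have [hb _ _] : face_of S O (barycenter S O) := face_of_barycenter SO.
split => //; have /andP[_ b1] := hypersimplex_hcoord_bounds ord_max hb.
by rewrite lt_neqAle b1 andbT (hcoord_barycenter_eq1 SO).
Qed.

Lemma num_half_open_j_faces j : num_sets _ (ho_j_face R n k j) #|half_open_face_types j|.
Proof.
apply: (num_sets_card
  (E := fun t x => face_of t.1 t.2 x /\ half_open_hypersimplex R n k x)).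
- move=> [S O]; rewrite !inE /= => /andP[/andP[SO /eqP <-] maxO].
  exists (face_of S O); split; first exact: j_face_face_of.
  split => //; exists (barycenter S O).
  by split; [exact: face_of_barycenter SO | exact: half_open_barycenter SO maxO].
- move=> [S O] [S' O']; rewrite !inE /= => /andP[/andP[SO _] maxO] /andP[/andP[SO' _] maxO'] E.
  apply: face_of_inj => //; [apply: (proj1 (iffLR (E _) _)) | apply: (proj1 (iffRL (E _) _))].
    by split; [exact: face_of_barycenter SO | exact: half_open_barycenter SO maxO].
  by split; [exact: face_of_barycenter SO' | exact: half_open_barycenter SO' maxO'].
- move=> G [F [F_j [[x [Fx x_ho]] G_eq]]].
  have [S [O [SO dimS F_eq]]] := j_faceP F_j.
  exists (S, O).
    rewrite !inE /= SO dimS eqxx /=; apply/negP => maxO.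
    have [_ _ x1] := iffLR (F_eq x) Fx.
    by move/half_open_hypersimplexE: x_ho => [_]; rewrite x1 // ltxx.
  by move=> y; rewrite G_eq; split => -[Fy y_ho]; split => //; apply/F_eq.
Qed.

End FaceCount.

Local Close Scope ring_scope.

Lemma card_set_sum (T : finType) (P : pred T) : #|[set x | P x]| = \sum_x P x.
Proof.
rewrite -sum1_card big_mkcond /=; apply: eq_bigr => x _; rewrite inE; by case: (P x).
Qed.

Lemma sum_index_iota_eq (lo hi c : nat) : \sum_(lo <= s < hi) (c == s) = (lo <= c < hi).
Proof.
rewrite -mem_index_iota -count_uniq_mem ?iota_uniq // -sum1_count [RHS]big_mkcond.
by apply: eq_bigr => s _ /=; rewrite eq_sym; case: (c == s).
Qed.

Section SubsetCounting.
Variable T : finType.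

Lemma card_subsets_range (A : {set T}) lo hi :
  #|[set O : {set T} | (O \subset A) && (lo <= #|O| < hi)]| =
  \sum_(lo <= s < hi) 'C(#|A|, s).
Proof.
rewrite card_set_sum; transitivity
  (\sum_(O : {set T}) \sum_(lo <= s < hi) ((O \subset A) && (#|O| == s))).
  by apply: eq_bigr => O _; case: (O \subset A); rewrite /= ?sum_index_iota_eq // big1.
by rewrite exchange_big /=; apply: eq_bigr => s _; rewrite -cards_draws card_set_sum.
Qed.

Lemma card_set_pairs (P : pred {set T}) (Q : {set T} -> pred {set T}) :
  #|[set t : {set T} * {set T} | P t.1 && Q t.1 t.2]| = \sum_(S | P S) #|[set O | Q S O]|.
Proof.
rewrite card_set_sum -(pair_big xpredT xpredT (fun S O => (P S && Q S O) : nat)) /=.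
rewrite [RHS]big_mkcond; apply: eq_bigr => S _; rewrite card_set_sum.
by case: (P S); rewrite //= big1.
Qed.

Lemma card_subsets_containing (A : {set T}) x (C : nat -> bool) : x \in A ->
  #|[set O : {set T} | [&& O \subset A, x \in O & C #|O|]]| =
  #|[set O : {set T} | (O \subset A :\ x) && C #|O|.+1]|.
Proof.
move=> xA; set D := [set O : {set T} | (O \subset A :\ x) && C #|O|.+1].
have xD O : O \in D -> x \notin O.
  rewrite inE => /andP[OA _]; apply/negP => xO.
  by have := subsetP OA x xO; rewrite in_setD1 eqxx.
suff -> : [set O : {set T} | [&& O \subset A, x \in O & C #|O|]] = (fun O => x |: O) @: D.
  apply: card_in_imset => O1 O2 O1D O2D /= eqO.
  by rewrite -(setU1K (xD _ O1D)) -(setU1K (xD _ O2D)) eqO.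
apply/setP => O; rewrite inE; apply/idP/imsetP.
  move=> /and3P[OA xO CO]; exists (O :\ x); last by rewrite setD1K.
  by rewrite inE (setSD _ OA) /=; rewrite (cardsD1 x O) xO in CO.
move=> [O' O'D ->]; have xO' := xD _ O'D; move: O'D; rewrite inE => /andP[O'A CO'].
rewrite subUset sub1set xA setU11 cardsU1 xO' /= add1n CO' andbT.
exact: subset_trans O'A (subD1set _ _).
Qed.

End SubsetCounting.

Section FaceTypeCount.
Variables (n k : nat).
Notation I := 'I_n.+1.

Lemma cardC_ord (S : {set I}) : #|~: S| = n.+1 - #|S|.
Proof. by have := cardsC S; rewrite card_ord; lia. Qed.

Lemma face_typesE j : (1 <= j)%N -> face_types n k j =
  [set t : {set I} * {set I} |
    (#|t.1| == j.+1) && ((t.2 \subset ~: t.1) && (k - j <= #|t.2| < k))].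
Proof.
move=> j_gt0; apply/setP => -[S O]; rewrite !inE /= /admissible.
by rewrite disjoint_sym disjoints_subset; case: (O \subset ~: S) => /=; lia.
Qed.

Lemma card_face_types0 : (0 < k <= n)%N -> #|face_types n k 0| = 'C(n, k) + 'C(n, k.-1).
Proof.
move=> k_range.
have -> : face_types n k 0 = [set t : {set I} * {set I} |
    (#|t.1| == 0) && ((t.2 \subset ~: t.1) && (#|t.2| == k))].
  apply/setP => -[S O]; rewrite !inE /= /admissible disjoint_sym disjoints_subset.
  by case: (O \subset ~: S) => /=; [lia | rewrite !andbF].
rewrite (card_set_pairs (fun S => #|S| == 0)
  (fun S O => (O \subset ~: S) && (#|O| == k))).
rewrite (eq_bigl [in [set S : {set I} | #|S| == 0]]); last by move=> S; rewrite inE.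
rewrite (eq_bigr (fun _ => 'C(n.+1, k))); last first.
  by move=> S; rewrite inE => /eqP S0; rewrite cards_draws cardC_ord S0 subn0.
by rewrite sum_nat_const card_draws card_ord bin0 mul1n; case: k k_range => // k' _.
Qed.

Lemma card_face_types j : (1 <= j)%N ->
  #|face_types n k j| = 'C(n.+1, j.+1) * \sum_(k - j <= s < k) 'C(n - j, s).
Proof.
move=> j_gt0; rewrite face_typesE // (card_set_pairs (fun S => #|S| == j.+1)
  (fun S O => (O \subset ~: S) && (k - j <= #|O| < k))).
rewrite (eq_bigl [in [set S : {set I} | #|S| == j.+1]]); last by move=> S; rewrite inE.
rewrite (eq_bigr (fun _ => \sum_(k - j <= s < k) 'C(n - j, s))); last first.
  by move=> S; rewrite inE => /eqP Sj; rewrite card_subsets_range cardC_ord Sj subSS.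
by rewrite sum_nat_const card_draws card_ord.
Qed.

(* The faces lost in the half-open hypersimplex are those with the slack coordinate
   [ord_max] in [O]: choose [S] away from [ord_max], then [O :\ ord_max]. *)
Lemma face_types_max_in j : (1 <= j)%N ->
  face_types n k j :\: half_open_face_types n k j =
  [set t : {set I} * {set I} | ((#|t.1| == j.+1) && (ord_max \notin t.1)) &&
     [&& t.2 \subset ~: t.1, ord_max \in t.2 & k - j <= #|t.2| < k]].
Proof.
move=> j_gt0; apply/setP => -[S O].
rewrite /half_open_face_types face_typesE // !inE /=.
case: (boolP (ord_max \in O)) => maxO; rewrite /= ?andbT ?andbF ?andNb //.
case: (boolP (O \subset ~: S)) => OS; rewrite /= ?andbF //.
by have := subsetP OS _ maxO; rewrite inE => ->; rewrite andbT.
Qed.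

Lemma card_face_types_max_in j : (1 <= j)%N ->
  #|face_types n k j :\: half_open_face_types n k j| =
  'C(n, j.+1) * \sum_(k.-1 - j <= s < k.-1) 'C(n - j - 1, s).
Proof.
move=> j_gt0; rewrite face_types_max_in //.
rewrite (card_set_pairs (fun S => (#|S| == j.+1) && (ord_max \notin S))
  (fun S O => [&& O \subset ~: S, ord_max \in O & k - j <= #|O| < k])).
rewrite (eq_bigr (fun _ => \sum_(k.-1 - j <= s < k.-1) 'C(n - j - 1, s))).
  rewrite (eq_bigl [in [set S : {set I} | (S \subset ~: [set ord_max]) && (#|S| == j.+1)]]).
    by rewrite sum_nat_const cards_draws cardsC1 card_ord.
  by move=> S; rewrite !inE subsetC sub1set inE andbC.
move=> S /andP[/eqP Sj maxS].
rewrite (@card_subsets_containing _ (~: S) ord_max (fun m => k - j <= m < k)) ?inE //.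
rewrite (eq_card (B := [set O : {set I} |
  (O \subset ~: S :\ ord_max) && (k.-1 - j <= #|O| < k.-1)])).
  have cardD : #|~: S :\ ord_max| = n - j - 1.
    by have := cardsD1 ord_max (~: S); rewrite inE maxS cardC_ord Sj subSS; lia.
  by rewrite card_subsets_range cardD.
by move=> O; rewrite !inE; case: (O \subset _) => //=; set m := #|O|; lia.
Qed.

Lemma card_face_types_split j : (1 <= j)%N ->
  #|face_types n k j| = #|half_open_face_types n k j| +
    'C(n, j.+1) * \sum_(k.-1 - j <= s < k.-1) 'C(n - j - 1, s).
Proof.
move=> j_gt0; rewrite -card_face_types_max_in //.
rewrite -(cardsID [set t : {set I} * {set I} | ord_max \notin t.2] (face_types n k j)).
congr (_ + _); apply: eq_card => t; rewrite /half_open_face_types !inE //.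
by case: (ord_max \in t.2); case: (admissible k t.1 t.2); case: (_ == j).
Qed.

End FaceTypeCount.

Theorem corollary1p4 (R : realType) (n k : nat) :
  (0 < k <= n)%N ->
  num_sets _ (j_face R n (hypersimplex R n k) 0) ('C(n, k) + 'C(n, k.-1))%N /\
  (forall j : nat, (1 <= j <= n)%N ->
     exists a b : nat,
       num_sets _ (j_face R n (hypersimplex R n k) j) a /\
       num_sets _ (ho_j_face R n k j) b /\
       a = (b + 'C(n, j.+1) * \sum_(k.-1 - j <= s < k.-1) 'C(n - j - 1, s))%N /\
       a = ('C(n.+1, j.+1) * \sum_(k - j <= s < k) 'C(n - j, s))%N).
Proof.
move=> k_range; split; first by rewrite -card_face_types0 //; apply: num_j_faces.
move=> j /andP[j_gt0 _].
exists #|face_types n k j|, #|half_open_face_types n k j|.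
split; first exact: num_j_faces.
split; first exact: num_half_open_j_faces.
by split; [apply: card_face_types_split | apply: card_face_types].
Qed.
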